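(* Every nice bipartite graph $G$ satisfies $\chi'_{qm\Sigma}(G)\le 6$.
   Context: All graphs are simple and finite. A $k$-edge-coloring of $G$ is any map $c:E(G)\to\{1,\dots,k\}$ (adjacent edges may share colors). It induces $\sigma_c(v)=\sum_{u\in N(v)}c(vu)$. The coloring is neighbor sum distinguishing (NSD) if $\sigma_c(u)\ne\sigma_c(v)$ for every edge $uv$. It is quasi-majority if every vertex $v$ is incident to at most $\lceil d(v)/2\rceil$ edges of each single color. $\chi'_{qm\Sigma}(G)$ denotes the least $k$ such that $G$ has a $k$-edge-coloring that is both quasi-majority and NSD. A graph is nice if it has no connected component isomorphic to $K_2$. *)

From mathcomp Require Import all_boot.
Set Implicit Arguments. Unset Strict Implicit. Unset Printing Implicit Defensive.

Definition simple_graph (V : finType) (e : rel V) : Prop :=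
  symmetric e /\ irreflexive e.

Definition nbhd (V : finType) (e : rel V) (v : V) : {set V} := [set u | e v u].
Definition deg (V : finType) (e : rel V) (v : V) : nat := #|nbhd e v|.

(* An edge coloring is a symmetric function c on pairs of vertices; only its values on
   edges matter.  It is a k-edge-coloring if every edge gets a color in {1,...,k}. *)
Definition is_k_edge_coloring (V : finType) (e : rel V) (k : nat) (c : V -> V -> nat) : Prop :=
  (forall u v, e u v -> c u v = c v u) /\
  (forall u v, e u v -> 1 <= c u v <= k).

Definition sigma_c (V : finType) (e : rel V) (c : V -> V -> nat) (v : V) : nat :=
  \sum_(u in nbhd e v) c v u.

Definition nsd (V : finType) (e : rel V) (c : V -> V -> nat) : Prop :=
  forall u v, e u v -> sigma_c e c u <> sigma_c e c v.

Definition quasi_majority (V : finType) (e : rel V) (c : V -> V -> nat) : Prop :=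
  forall (v : V) (i : nat), #|[set u in nbhd e v | c v u == i]| <= uphalf (deg e v).

Definition bipartite (V : finType) (e : rel V) : Prop :=
  exists f : V -> bool, forall u v, e u v -> f u != f v.

(* nice: no connected component isomorphic to K2, i.e. no edge uv with d(u)=d(v)=1 *)
Definition nice (V : finType) (e : rel V) : Prop :=
  ~ (exists u v, [/\ e u v, deg e u = 1 & deg e v = 1]).

Definition qmSigma_le (V : finType) (e : rel V) (k : nat) : Prop :=
  exists c : V -> V -> nat,
    [/\ is_k_edge_coloring e k c, quasi_majority e c & nsd e c].

From mathcomp Require Import all_boot zify.
Set Implicit Arguments. Unset Strict Implicit. Unset Printing Implicit Defensive.

(* Fix a proper 2-colouring g in which every non-trivial component has two
   vertices of colour true: flip the bipartition on each component whose true
   side is a single vertex; niceness then puts two vertices on the other side.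
   Adding a weight t along a walk from x to y changes the weighted degrees
   modulo 3 only at x (by t) and at y (by t or -t, according to the parity of
   the walk).  This lets one repair the vertices one by one until there are
   symmetric weights r whose weighted degree is 0 mod 3 exactly on the false
   side (isolated vertices aside).  Independently, every graph has a balanced
   orientation: while some vertex has outdegree >= indegree + 2, some vertex
   reachable from it has indegree > outdegree, and reversing a path between
   them lowers sum |outdeg - indeg|.  Colour the edge ab by the residue of
   r(ab) in {1,2,3}, plus 3 when ab is oriented away from its true end.  The
   colour sums agree with the weighted degrees mod 3, so they differ along
   edges; and at a vertex all edges of one colour point the same way, so there
   are at most ceil(d/2) of them. *)

Lemma sum_andb_pred1 (T : finType) (b : bool) (y : T) : \sum_u (b && (u == y) : nat) = b.
Proof. by rewrite (bigD1 y) //= eqxx andbT big1 ?addn0 // => u /negbTE->; rewrite andbF. Qed.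

Lemma sum_pred1_in (T : finType) (A : {set T}) z : z \in A -> \sum_(u in A) (u == z : nat) = 1.
Proof. by move=> zA; rewrite (bigD1 z) //= eqxx big1 // => u /andP[_ /negbTE->]. Qed.

Lemma deg_gt0P (V : finType) (e : rel V) v : reflect (exists u, e v u) (0 < deg e v).
Proof. by apply: (iffP card_gt0P) => -[u vu]; exists u; move: vu; rewrite inE. Qed.

Lemma avoid_zero_mod3 a b : exists t, (a + t) %% 3 != 0 /\ (b + 2 * t) %% 3 != 0.
Proof.
have [Ha|[Ha|Ha]] : a %% 3 = 0 \/ a %% 3 = 1 \/ a %% 3 = 2 by lia.
all: have [Hb|[Hb|Hb]] : b %% 3 = 0 \/ b %% 3 = 1 \/ b %% 3 = 2 by lia.
all: first [exists 1; lia | exists 2; lia | exists 0; lia].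
Qed.

Section Orientation.
Variables (V : finType) (e : rel V).
Hypotheses (esym : symmetric e) (eirr : irreflexive e).

Definition orientation (o : rel V) : Prop :=
  (forall a b, o a b -> e a b) /\ (forall a b, e a b -> o b a = ~~ o a b).

Definition outdeg (o : rel V) v : nat := \sum_u (o v u : nat).
Definition indeg (o : rel V) v : nat := \sum_u (o u v : nat).

Lemma outdegE (o : rel V) v : outdeg o v = #|[set u | o v u]|.
Proof. by rewrite -sum1dep_card big_mkcond. Qed.

Lemma indegE (o : rel V) v : indeg o v = #|[set u | o u v]|.
Proof. by rewrite -sum1dep_card big_mkcond. Qed.

Definition skew (o : rel V) v : nat :=
  (outdeg o v - indeg o v) + (indeg o v - outdeg o v).
Definition imbalance (o : rel V) : nat := \sum_v skew o v.

Lemma deg_outdeg_indeg o v : orientation o -> deg e v = outdeg o v + indeg o v.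
Proof.
move=> [oe oN]; rewrite /deg -sum1_card big_mkcond -big_split /=.
apply: eq_bigr => u _; rewrite inE.
case evu: (e v u); first by rewrite (oN _ _ evu); case: (o v u).
case ovu: (o v u); first by rewrite (oe _ _ ovu) in evu.
by case ouv: (o u v) => //; move: (oe _ _ ouv); rewrite esym evu.
Qed.

Definition converse (o : rel V) : rel V := fun a b => o b a.

Lemma orientation_converse o : orientation o -> orientation (converse o).
Proof.
move=> [oe oN]; split; first by move=> a b /oe; rewrite esym.
by move=> a b eab; rewrite /converse (oN _ _ eab) negbK.
Qed.

Lemma imbalance_converse o : imbalance (converse o) = imbalance o.
Proof. by apply: eq_bigr => v _; rewrite /skew addnC. Qed.

Definition flip_arc (o : rel V) x y : rel V := fun a b =>
  if ((a == x) && (b == y)) || ((a == y) && (b == x)) then ~~ o a b else o a b.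

Lemma orientation_flip_arc o x y : orientation o -> o x y -> orientation (flip_arc o x y).
Proof.
move=> [oe oN] oxy; split.
  move=> a b; rewrite /flip_arc; case: ifP => [/orP[]/andP[/eqP-> /eqP->] | _].
  - by rewrite oxy.
  - by move=> _; rewrite esym oe.
  - exact: oe.
move=> a b eab; rewrite /flip_arc (oN _ _ eab) orbC andbC [(b == x) && _]andbC.
by case: ifP.
Qed.

Lemma flip_arcE o x y a b : orientation o -> o x y ->
  flip_arc o x y a b + ((a == x) && (b == y)) = o a b + ((a == y) && (b == x)).
Proof.
move=> [oe oN] oxy.
have xy : (x == y) = false by apply: contraTF (oe _ _ oxy) => /eqP->; rewrite eirr.
have oyx : o y x = false by rewrite (oN _ _ (oe _ _ oxy)) oxy.
rewrite /flip_arc; case: ifP => [/orP[]/andP[/eqP-> /eqP->] | /norP[/negbTE-> /negbTE->] //].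
- by rewrite !eqxx xy oxy.
by rewrite !eqxx eq_sym xy oyx.
Qed.

Lemma outdeg_flip_arc o x y w : orientation o -> o x y ->
  outdeg (flip_arc o x y) w + (w == x) = outdeg o w + (w == y).
Proof.
move=> oo oxy; rewrite /outdeg -(sum_andb_pred1 (w == x) y) -(sum_andb_pred1 (w == y) x).
by rewrite -!big_split; apply: eq_bigr => u _; apply: flip_arcE.
Qed.

Lemma indeg_flip_arc o x y w : orientation o -> o x y ->
  indeg (flip_arc o x y) w + (w == y) = indeg o w + (w == x).
Proof.
move=> oo oxy; rewrite /indeg -(sum_andb_pred1 (w == y) x) -(sum_andb_pred1 (w == x) y).
rewrite -!big_split; apply: eq_bigr => u _.
by rewrite [(w == y) && _]andbC [(w == x) && _]andbC; apply: flip_arcE.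
Qed.

Lemma orientation_reverse_path o x p : orientation o -> path o x p -> uniq (x :: p) ->
  exists2 o', orientation o' & forall w,
    outdeg o' w + (w == x) = outdeg o w + (w == last x p) /\
    indeg o' w + (w == last x p) = indeg o w + (w == x).
Proof.
elim: p x o => [|y p IH] x o oo /=; first by exists o.
case/andP=> oxy opath /andP[xNp up].
have oo1 := orientation_flip_arc oo oxy.
have opath1 : path (flip_arc o x y) y p.
  rewrite -(@eq_in_path _ (predC1 x) o) //.
    by move=> a b /= ax bx; rewrite /flip_arc (negbTE ax) (negbTE bx) !andbF.
  by apply/allP => z zp /=; apply: contraNneq xNp => <-.
have [o' oo' IHw] := IH y _ oo1 opath1 up.
exists o' => // w; have [Ho Hi] := IHw w.
have := outdeg_flip_arc w oo oxy; have := indeg_flip_arc w oo oxy; lia.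
Qed.

Lemma closed_sum_outdeg_le (o : rel V) (S : {set V}) :
    (forall w u, w \in S -> o w u -> u \in S) ->
  \sum_(w in S) outdeg o w <= \sum_(w in S) indeg o w.
Proof.
move=> Sclosed; apply: (@leq_trans (\sum_(w in S) \sum_(u in S) (o w u : nat))).
  apply: leq_sum => w wS; rewrite /outdeg (bigID (mem S)) /= [X in _ + X]big1 ?addn0 //.
  by move=> u uNS; apply/eqP; rewrite eqb0; apply: contra uNS; apply: Sclosed.
rewrite exchange_big; apply: leq_sum => u _.
by rewrite /indeg [X in _ <= X](bigID (mem S)) leq_addr.
Qed.

Lemma exists_reachable_deficient (o : rel V) v : indeg o v < outdeg o v ->
  exists2 y, connect o v y & outdeg o y < indeg o y.
Proof.
move=> ltv; case: (pickP [pred y | connect o v y & outdeg o y < indeg o y]).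
  by move=> y /andP[]; exists y.
move=> none; set S := [set w | connect o v w].
have Sclosed w u : w \in S -> o w u -> u \in S.
  by rewrite !inE => vw /connect1; apply: connect_trans.
have vS : v \in S by rewrite inE connect0.
suff: \sum_(w in S) indeg o w < \sum_(w in S) outdeg o w.
  by rewrite ltnNge closed_sum_outdeg_le.
rewrite (bigD1 v vS) [X in _ < X](bigD1 v vS) /= -addSn leq_add //.
apply: leq_sum => w /andP[wS _].
have vw : connect o v w by have : w \in S := wS; rewrite inE.
by rewrite leqNgt; have := none w; rewrite /= vw /= => ->.
Qed.

Lemma imbalance_decrease o v : orientation o -> indeg o v + 2 <= outdeg o v ->
  exists2 o', orientation o' & imbalance o' < imbalance o.
Proof.
move=> oo hv.
have [y vy lty] : exists2 y, connect o v y & outdeg o y < indeg o y.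
  by apply: exists_reachable_deficient; lia.
have [p [op up lastp]] : exists p, [/\ path o v p, uniq (v :: p) & last v p = y].
  case/connectP: vy => p0 /shortenP[p op up _] ->; by exists p.
have [o' oo' deg_o'] := orientation_reverse_path oo op up; rewrite lastp in deg_o'.
exists o' => //.
have yv : (y == v) = false by apply: contraTF lty => /eqP->; lia.
have skew_o' w : skew o' w + 2 * (w == v) <= skew o w.
  case: (deg_o' w); rewrite /skew.
  case: (eqVneq w v) => [->|_]; last case: (eqVneq w y) => [->|_].
  - by rewrite eq_sym yv; lia.
  - by rewrite /=; lia.
  - by rewrite /=; lia.
rewrite /imbalance (bigD1 v isT) [X in _ < X](bigD1 v isT) /=.
have := skew_o' v; rewrite eqxx => skew_v.
have : \sum_(w | w != v) skew o' w <= \sum_(w | w != v) skew o w.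
  by apply: leq_sum => w _; apply: leq_trans (skew_o' w); apply: leq_addr.
lia.
Qed.

Lemma orientation_by_rank : orientation (fun a b => e a b && (enum_rank a < enum_rank b)).
Proof.
split=> [a b /andP[] // | a b eab]; rewrite esym eab /=.
have ab : a != b by apply: contraTneq eab => ->; rewrite eirr.
by rewrite ltn_neqAle -leqNgt (inj_eq (@ord_inj _)) (inj_eq enum_rank_inj) eq_sym ab.
Qed.

Theorem exists_balanced_orientation : exists2 o, orientation o &
  forall v, outdeg o v <= indeg o v + 1 /\ indeg o v <= outdeg o v + 1.
Proof.
suff balance o : orientation o -> exists2 o', orientation o' &
    forall v, outdeg o' v <= indeg o' v + 1 /\ indeg o' v <= outdeg o' v + 1.
  exact: balance orientation_by_rank.
move=> oo; have [n] := ubnP (imbalance o); elim: n o oo => // n IH o oo /ltnSE lt_n.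
case: (pickP [pred v | (indeg o v + 2 <= outdeg o v) || (outdeg o v + 2 <= indeg o v)]).
  move=> v /orP[] hv.
    have [o' oo' lt'] := imbalance_decrease oo hv.
    by apply: (IH o' oo'); apply: leq_trans lt_n.
  have [o' oo' lt'] := imbalance_decrease (orientation_converse oo) hv.
  apply: (IH _ (orientation_converse oo')).
  by rewrite imbalance_converse (leq_trans _ lt_n) // -(imbalance_converse o).
by move=> balanced; exists o => // v; move: (balanced v) => /= /norP[]; lia.
Qed.

End Orientation.

Section WeightSums.
Variables (V : finType) (e : rel V).
Hypotheses (esym : symmetric e) (eirr : irreflexive e).
Variable h : V -> bool.
Hypothesis h_proper : forall a b, e a b -> h a != h b.

Definition realizable_mod3 (s : V -> nat) : Prop :=
  exists2 r : V -> V -> nat, (forall a b, r a b = r b a) &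
    forall v, sigma_c e r v = s v %[mod 3].

Lemma realizable_mod3_0 : realizable_mod3 (fun _ => 0).
Proof. by exists (fun _ _ => 0) => // v; rewrite /sigma_c big1. Qed.

Lemma realizable_mod3_eq s s' :
  realizable_mod3 s -> (forall v, s v = s' v %[mod 3]) -> realizable_mod3 s'.
Proof. by move=> [r rsym sr] ss'; exists r => // v; rewrite sr ss'. Qed.

Lemma sigma_c_edge_indicator x z w : e x z ->
  sigma_c e (fun a b => ((a == x) && (b == z)) || ((a == z) && (b == x)) : nat) w =
  (w == x) + (w == z).
Proof.
move=> exz; have xz : (x == z) = false by apply: contraTF exz => /eqP->; rewrite eirr.
rewrite /sigma_c; case: (eqVneq w x) => [->|wx]; last case: (eqVneq w z) => [->|wz].
- by rewrite xz /= (eq_bigr (fun u => (u == z : nat))) ?sum_pred1_in ?inE // => u; rewrite orbF.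
- by rewrite (eq_bigr (fun u => (u == x : nat))) ?sum_pred1_in ?inE 1?esym.
by rewrite big1.
Qed.

Lemma realizable_mod3_edge s x z t : realizable_mod3 s -> e x z ->
  realizable_mod3 (fun w => s w + t * (w == x) + t * (w == z)).
Proof.
move=> [r rsym sr] exz.
exists (fun a b => r a b + t * (((a == x) && (b == z)) || ((a == z) && (b == x)))).
  by move=> a b; rewrite rsym; case: (a == x) (a == z) (b == x) (b == z) => [] [] [] [].
move=> w; have := sigma_c_edge_indicator w exz; have := sr w.
rewrite /sigma_c big_split -big_distrr /= => {}sr ->.
by rewrite -modnDml sr modnDml; congr (_ %% 3); lia.
Qed.

Lemma realizable_mod3_path s x p t : realizable_mod3 s -> path e x p ->
  realizable_mod3 (fun w => s w + t * (w == x) +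
    (if h x == h (last x p) then 2 * t else t) * (w == last x p)).
Proof.
elim: p x s t => [|z p IH] x s t rs /=.
  by move=> _; apply: realizable_mod3_eq rs _ => w; rewrite eqxx; case: (w == x) => /=; lia.
case/andP=> exz zp.
(* Weight [t] on the edge [x z], then [2 * t] along the rest: [z] receives [3 * t]. *)
have := IH z _ (2 * t) (realizable_mod3_edge t rs exz) zp.
move/realizable_mod3_eq; apply=> w; have := h_proper exz.
case: (h x); case: (h z); case: (h (last z p)) => //= _;
case: (w == x); case: (w == z); case: (w == last z p) => /=; lia.
Qed.

Lemma realizable_mod3_connect s x y t : realizable_mod3 s -> connect e x y ->
  realizable_mod3 (fun w => s w + t * (w == x) +
    (if h x == h y then 2 * t else t) * (w == y)).
Proof. by move=> rs /connectP[p xp ->]; apply: realizable_mod3_path. Qed.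

Hypothesis h_rich : forall v, 0 < deg e v ->
  exists b1 b2, [/\ b1 != b2, h b1, h b2, connect e v b1 & connect e v b2].

Definition fits_mod3 (s : V -> nat) v : bool :=
  (0 < deg e v) ==> ((s v %% 3 == 0) == ~~ h v).

Lemma fits_mod3_modeq s s' w : s' w = s w %[mod 3] -> fits_mod3 s' w = fits_mod3 s w.
Proof. by rewrite /fits_mod3 => ->. Qed.

Lemma fits_mod3_nonzero s w : h w -> s w %% 3 != 0 -> fits_mod3 s w.
Proof. by rewrite /fits_mod3 => -> /negbTE->; rewrite implybT. Qed.

Lemma repair_true_vertex s v : realizable_mod3 s -> h v -> 0 < deg e v ->
  exists2 s', realizable_mod3 s' & forall w, fits_mod3 s w || (w == v) -> fits_mod3 s' w.
Proof.
move=> rs hv dv; have [b1 [b2 [b12 hb1 hb2 vb1 vb2]]] := h_rich dv.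
have [b [bv hb vb]] : exists b, [/\ b != v, h b & connect e v b].
  case: (eqVneq b1 v) => [b1v|b1v]; last by exists b1; split.
  by exists b2; split => //; rewrite -b1v eq_sym.
have [t [tv tb]] := avoid_zero_mod3 (s v) (s b).
exists (fun w => s w + t * (w == v) + 2 * t * (w == b)).
  by have := realizable_mod3_connect t rs vb; rewrite hv hb.
move=> w; case: (eqVneq w v) => [-> _|wv]; last rewrite orbF => wfits.
  by apply: fits_mod3_nonzero; rewrite // eqxx [v == b]eq_sym (negbTE bv) muln1 muln0 addn0.
case: (eqVneq w b) => [->|wb].
  by apply: fits_mod3_nonzero; rewrite // eqxx (negbTE bv) muln0 muln1 addn0.
by rewrite (fits_mod3_modeq (s := s)) // (negbTE wv) (negbTE wb) !muln0 !addn0.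
Qed.

Lemma repair_false_vertex s v : realizable_mod3 s -> ~~ h v -> 0 < deg e v ->
  exists2 s', realizable_mod3 s' & forall w, fits_mod3 s w || (w == v) -> fits_mod3 s' w.
Proof.
move=> rs /negbTE hv dv; have [b1 [b2 [b12 hb1 hb2 vb1 vb2]]] := h_rich dv.
have [t [tb1 tb2]] := avoid_zero_mod3 (s b1) (s b2 + 2 * s v).
set u := 2 * (s v + t).
exists (fun w => s w + t * (w == v) + t * (w == b1) + u * (w == v) + u * (w == b2)).
  by have := realizable_mod3_connect u (realizable_mod3_connect t rs vb1) vb2; rewrite hv hb1 hb2.
have b1v : (b1 == v) = false by apply: contraTF hb1 => /eqP->; rewrite hv.
have b2v : (b2 == v) = false by apply: contraTF hb2 => /eqP->; rewrite hv.
move=> w; case: (eqVneq w v) => [-> _|wv]; last rewrite orbF => wfits.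
  rewrite /fits_mod3 hv [v == b1]eq_sym [v == b2]eq_sym b1v b2v eqxx !muln1 !muln0 !addn0.
  by rewrite eqb_id /u -mulSn modnMr implybT.
case: (eqVneq w b1) => [->|wb1].
  by apply: fits_mod3_nonzero; rewrite // b1v eqxx /= (negbTE b12) !muln0 muln1 !addn0.
case: (eqVneq w b2) => [->|wb2].
  apply: fits_mod3_nonzero; rewrite // b2v eqxx [b2 == b1]eq_sym /= (negbTE b12).
  by rewrite !muln0 muln1 !addn0 /u mulnDr addnA.
by rewrite (fits_mod3_modeq (s := s)) // (negbTE wv) (negbTE wb1) (negbTE wb2) !muln0 !addn0.
Qed.

Lemma repair_vertex s v : realizable_mod3 s ->
  exists2 s', realizable_mod3 s' & forall w, fits_mod3 s w || (w == v) -> fits_mod3 s' w.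
Proof.
move=> rs; case: (posnP (deg e v)) => [dv0|dv].
  by exists s => // w /orP[// | /eqP->]; rewrite /fits_mod3 dv0.
by case hv: (h v); [apply: repair_true_vertex | apply: repair_false_vertex; rewrite ?hv].
Qed.

Lemma exists_mod3_weighting : exists2 r : V -> V -> nat, (forall a b, r a b = r b a) &
  forall v, 0 < deg e v -> (sigma_c e r v %% 3 == 0) = ~~ h v.
Proof.
suff [s [r rsym sr] sfits] : exists2 s, realizable_mod3 s & all (fits_mod3 s) (enum V).
  exists r => // v dv; move/allP/(_ v (mem_enum _ v)): sfits.
  by rewrite /fits_mod3 dv -modn_mod sr modn_mod => /eqP.
elim: (enum V) => [|v l [s rs sfits]]; first by exists (fun _ => 0); first exact: realizable_mod3_0.
have [s' rs' s'fits] := repair_vertex v rs; exists s' => //=.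
rewrite s'fits ?eqxx ?orbT //=; apply/allP => w wl; apply: s'fits.
by rewrite (allP sfits w wl).
Qed.
End WeightSums.

Section RichBipartition.
Variables (V : finType) (e : rel V).
Hypothesis esym : symmetric e.

Lemma nice_exists_deg_gt1 v : nice e -> 0 < deg e v -> exists2 w, connect e v w & 1 < deg e w.
Proof.
move=> enice /deg_gt0P[u evu]; case: (ltnP 1 (deg e v)) => [dv|dv]; first by exists v.
exists u; first exact: connect1.
rewrite ltn_neqAle eq_sym; apply/andP; split; last by apply/deg_gt0P; exists v; rewrite esym.
apply/eqP => du; apply: enice; exists v, u; split => //.
by apply/eqP; rewrite eqn_leq dv; apply/deg_gt0P; exists u.
Qed.

Lemma nice_bipartition : bipartite e -> nice e -> exists2 g : V -> bool,
  forall a b, e a b -> g a != g b &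
  forall v, 0 < deg e v ->
    exists b1 b2, [/\ b1 != b2, g b1, g b2, connect e v b1 & connect e v b2].
Proof.
move=> [f f_proper] enice.
pose many v := 1 < #|[set w | connect e v w && f w]|.
have many_connect v w : connect e v w -> many v = many w.
  move=> vw; rewrite /many (@eq_card _ _ [set x | connect e w x && f x]) // => x.
  by rewrite !inE (same_connect (sym_connect_sym esym) vw).
exists (fun v => f v == many v).
  move=> a b eab; rewrite (many_connect a b (connect1 eab)).
  by move: (f_proper a b eab); case: (f a); case: (f b); case: (many b).
move=> v dv; have [w vw /card_gt1P[x [y [wx wy xy]]]] := nice_exists_deg_gt1 enice dv.
rewrite !inE in wx wy.
have vx : connect e v x := connect_trans vw (connect1 wx).
have vy : connect e v y := connect_trans vw (connect1 wy).
have fxy : f x = f y.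
  by move: (f_proper w x wx) (f_proper w y wy); case: (f w); case: (f x); case: (f y).
case mv: (many v).
  have /card_gt1P[b1 [b2 [vb1 vb2 b12]]] := mv; rewrite !inE in vb1 vb2.
  case/andP: vb1 => vb1 fb1; case/andP: vb2 => vb2 fb2.
  by exists b1, b2; rewrite -!(many_connect v) // mv fb1 fb2.
have fx : f x = false.
  apply: negbTE; apply: contraFN mv => fx; apply/card_gt1P; exists x, y.
  by rewrite !inE vx vy fx -fxy.
by exists x, y; rewrite -!(many_connect v) // mv -fxy fx.
Qed.
End RichBipartition.

Definition color_of (r : nat) (b : bool) : nat :=
  (if r %% 3 == 0 then 3 else r %% 3) + 3 * b.

Lemma color_of_mod3 r b : color_of r b = r %[mod 3].
Proof. by rewrite /color_of; case: eqP; case: b => /=; lia. Qed.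

Lemma color_of_gt3 r b : (3 < color_of r b) = b.
Proof.
have := ltn_pmod r (isT : 0 < 3).
by rewrite /color_of; case: eqP; case: b => /= ? ?; apply/idP/idP => //; lia.
Qed.

Lemma color_of_range r b : 1 <= color_of r b <= 6.
Proof. by have := ltn_pmod r (isT : 0 < 3); rewrite /color_of; case: eqP; case: b => /=; lia. Qed.

Section Coloring.
Variables (V : finType) (e : rel V).
Hypothesis esym : symmetric e.
Variables (g : V -> bool) (r : V -> V -> nat) (o : rel V).
Hypothesis g_proper : forall a b, e a b -> g a != g b.
Hypothesis r_sym : forall a b, r a b = r b a.
Hypothesis r_mod3 : forall v, 0 < deg e v -> (sigma_c e r v %% 3 == 0) = ~~ g v.
Hypothesis o_orientation : orientation e o.
Hypothesis o_balanced : forall v, outdeg o v <= indeg o v + 1 /\ indeg o v <= outdeg o v + 1.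

Definition coloring_of a b := color_of (r a b) (o a b == g a).

Lemma coloring_of_sym a b : e a b -> coloring_of a b = coloring_of b a.
Proof.
move=> eab; rewrite /coloring_of r_sym (o_orientation.2 _ _ eab).
by move: (g_proper eab); case: (g a); case: (g b); case: (o a b).
Qed.

Lemma coloring_of_edge_coloring : is_k_edge_coloring e 6 coloring_of.
Proof. by split=> [a b|a b _]; [apply: coloring_of_sym | apply: color_of_range]. Qed.



Lemma coloring_of_quasi_majority : quasi_majority e coloring_of.
Proof.
move=> v i; set A := [set u in nbhd e v | _].
have deg_v := deg_outdeg_indeg esym v o_orientation.
have [Hout Hin] := o_balanced v.
have uphalf_deg : maxn (outdeg o v) (indeg o v) <= uphalf (deg e v).
  by rewrite deg_v uphalfE -divn2; lia.
apply: leq_trans uphalf_deg; rewrite leq_max outdegE indegE.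
have A_dir u : u \in A -> o v u = (g v == (3 < i)).
  rewrite !inE => /andP[_ /eqP <-]; rewrite color_of_gt3.
  by case: (o v u); case: (g v).
case giv: (g v == (3 < i)); apply/orP; [left | right];
  apply/subset_leq_card/subsetP => u uA; rewrite inE; first by rewrite A_dir.
have evu : e v u by move: uA; rewrite !inE => /andP[].
by rewrite (o_orientation.2 _ _ evu) A_dir ?giv.
Qed.

Lemma sigma_c_coloring_of_mod3 v : sigma_c e coloring_of v = sigma_c e r v %[mod 3].
Proof.
rewrite /sigma_c -modn_summ -[in RHS]modn_summ; congr (_ %% 3).
by apply: eq_bigr => u _; rewrite color_of_mod3.
Qed.

Lemma coloring_of_nsd : nsd e coloring_of.
Proof.
move=> a b eab sab; move: (g_proper eab); apply/negP; rewrite negbK.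
have Eab : sigma_c e r a = sigma_c e r b %[mod 3] by rewrite -!sigma_c_coloring_of_mod3 sab.
rewrite -(inj_eq negb_inj) -!r_mod3 ?Eab //; apply/deg_gt0P.
  by exists a; rewrite esym.
by exists b.
Qed.
End Coloring.

Theorem mainTheorem2 (V : finType) (e : rel V) :
  simple_graph e -> bipartite e -> nice e -> qmSigma_le e 6.
Proof.
move=> [esym eirr] ebip enice.
have [g g_proper g_rich] := nice_bipartition esym ebip enice.
have [r r_sym r_mod3] := exists_mod3_weighting esym eirr g_proper g_rich.
have [o o_orientation o_balanced] := exists_balanced_orientation esym eirr.
exists (coloring_of g r o); split.
- exact: coloring_of_edge_coloring.
- exact: coloring_of_quasi_majority.
- exact: coloring_of_nsd.
Qed.
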